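(* Let $T$ be a TCD map on a minimal BTB graph $G$. Let $f$ be an internal face with boundary vertices $b_1,w_1,\dots,b_m,w_m$ in counterclockwise cyclic order (so $b_i$ is adjacent to $w_{i-1}$ and $w_i$, indices mod $m$), and let $v_i$ be the third white neighbour of $b_i$. Then $$X_f=(-1)^{m+1}\,\mathrm{mr}\bigl(T(w_1),T(v_2),T(w_2),T(v_3),\dots,T(w_m),T(v_1)\bigr)=-\prod_{i=1}^m\lambda\bigl(T(w_{i-1}),T(w_i),T(v_i)\bigr).$$
   Context: A BTB graph is a planar bipartite graph (black $B$, white $W$, faces $F$) in a disk or cactus. It has boundary white vertices on the boundary and every black vertex of degree $3$. It is minimal if zig-zag paths (turning maximally left at white and right at black vertices) are never closed, never traverse an edge twice, and no two both traverse two distinct edges $e_1$ then $e_2$. Internal faces are those not adjacent to the boundary. A TCD map is $T:W\to\mathbb{CP}^d$ such that the neighbours of each black vertex have pairwise distinct collinear images. A VRC of $T$ consists of lifts $V(w)\neq 0$ and nonzero weights $\mu$ with $\sum_{w\sim b}\mu(bw)V(w)=0$. The projective cluster variable of an internal face is $X_f=(-1)^{m+1}\prod_{i=1}^m\mu(b_iw_i)/\mu(b_iw_{i-1})$, with labelling as in the claim; it is gauge independent. For collinear $P_1,P_2,P_3$ in an affine chart, $\lambda(P_1,P_2,P_3)=(P_1-P_3)/(P_2-P_3)$. For points $P_1,P_{1,2},P_2,P_{2,3},\dots,P_m,P_{m,1}$ with each $P_{i,i+1}$ on the line $P_iP_{i+1}$, the multi-ratio is $\mathrm{mr}=\prod_{i=1}^m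 (P_i-P_{i,i+1})/(P_{i,i+1}-P_{i+1})$, computed in any affine chart containing all points. *)

From mathcomp Require Import all_boot all_algebra.
From mathcomp Require Import complex.
From mathcomp Require Import Rstruct.
From Stdlib Require Reals.
Set Implicit Arguments. Unset Strict Implicit. Unset Printing Implicit Defensive.
Import GRing.Theory.
Local Open Scope ring_scope.

Definition CC : fieldType := (Rdefinitions.R)[i].

(* A point of CP^d is represented by a nonzero homogeneous coordinate vector
   in C^(d+1) (a row vector); two such vectors represent the same point iff
   they are proportional. *)
Definition pt (d : nat) := 'rV[CC]_(d.+1).

Definition proj_eq (d : nat) (p q : pt d) : Prop :=
  exists c : CC, c != 0 /\ p = c *: q.

Definition collinear3 (d : nat) (p q r : pt d) : Prop :=
  (\rank (col_mx p (col_mx q r)) <= 2)%N.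

Definition black_deg3 (B W : finType) (adj : B -> W -> bool) : Prop :=
  forall b : B, #|[set w | adj b w]| = 3%N.

Definition tcd_map (d : nat) (B W : finType) (adj : B -> W -> bool)
  (T : W -> pt d) : Prop :=
  (forall w, T w != 0) /\
  (forall b w1 w2, adj b w1 -> adj b w2 -> w1 != w2 -> ~ proj_eq (T w1) (T w2)) /\
  (forall b w1 w2 w3, adj b w1 -> adj b w2 -> adj b w3 ->
     collinear3 (T w1) (T w2) (T w3)).

Definition vrc (d : nat) (B W : finType) (adj : B -> W -> bool)
  (T : W -> pt d) (V : W -> pt d) (mu : B -> W -> CC) : Prop :=
  (forall w, V w != 0 /\ proj_eq (V w) (T w)) /\
  (forall b w, adj b w -> mu b w != 0) /\
  (forall b, \sum_(w | adj b w) mu b w *: V w = 0).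

Definition iprev (n : nat) (i : 'I_n.+1) : 'I_n.+1 := ord_pred i.
Definition inext (n : nat) (i : 'I_n.+1) : 'I_n.+1 := ordS i.

(* Local data of a face with boundary b_1,w_1,...,b_m,w_m (indices mod m,
   here 0..m-1 with m = n.+1): b_i is adjacent to w_{i-1} and w_i, and v_i
   is the third white neighbour of b_i. *)
Definition face_labelling (B W : finType) (adj : B -> W -> bool) (n : nat)
  (bs : 'I_n.+1 -> B) (ws vs : 'I_n.+1 -> W) : Prop :=
  forall i, [/\ adj (bs i) (ws (iprev i)), adj (bs i) (ws i) & adj (bs i) (vs i)]
     /\ [/\ ws (iprev i) != ws i, vs i != ws (iprev i) & vs i != ws i].

Definition cluster_var (B W : finType) (n : nat) (mu : B -> W -> CC)
  (bs : 'I_n.+1 -> B) (ws : 'I_n.+1 -> W) : CC :=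
  (-1) ^+ (n.+1).+1 * \prod_(i < n.+1) (mu (bs i) (ws i) / mu (bs i) (ws (iprev i))).

(* An affine chart of CP^d is given by a nonzero linear form h (a column
   vector); it contains p iff h(p) != 0, and there p is represented by the
   affine point p / h(p) in the affine hyperplane {h = 1} ~ C^d. *)
Definition hval (d : nat) (h : 'cV[CC]_(d.+1)) (p : pt d) : CC := (p *m h) 0 0.
Definition in_chart (d : nat) (h : 'cV[CC]_(d.+1)) (p : pt d) : bool :=
  hval h p != 0.
Definition aff (d : nat) (h : 'cV[CC]_(d.+1)) (p : pt d) : pt d :=
  (hval h p)^-1 *: p.

Definition vratio (d : nat) (u v : pt d) : CC :=
  if [pick j | v 0 j != 0] is Some j then u 0 j / v 0 j else 0.

Definition lambda (d : nat) (h : 'cV[CC]_(d.+1)) (P1 P2 P3 : pt d) : CC :=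
  vratio (aff h P1 - aff h P3) (aff h P2 - aff h P3).

(* Multi-ratio of P_1, P_{1,2}, P_2, P_{2,3}, ..., P_m, P_{m,1}:
   prod_i (P_i - P_{i,i+1}) / (P_{i,i+1} - P_{i+1}), computed in chart h.
   P i = P_i and Q i = P_{i,i+1}. *)
Definition multiratio (d n : nat) (h : 'cV[CC]_(d.+1)) (P Q : 'I_n.+1 -> pt d) : CC :=
  \prod_(i < n.+1) vratio (aff h (P i) - aff h (Q i)) (aff h (Q i) - aff h (P (inext i))).

(* At a black vertex with white neighbours x, y, z the vector relation
   a V(x) + b V(y) + c V(z) = 0, read in an affine chart h, becomes an affine
   relation among the points T(x), T(y), T(z) whose coefficients a h(V x),
   b h(V y), c h(V z) sum to zero.  Hence
   lambda(T x, T y, T z) = -(b / a) * h(V y) / h(V x).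
   Around the face the chart factors h(V(w_i)) / h(V(w_{i-1})) telescope, so
   prod_i lambda_i = (-1)^m prod_i mu(b_i w_i) / mu(b_i w_{i-1}), and each factor
   of the multi-ratio is -lambda at the next black vertex. *)
From mathcomp Require Import all_boot all_algebra.
Import GRing.Theory.
Local Open Scope ring_scope.

Section AffineChart.

Context {d : nat} {h : 'cV[CC]_(d.+1)}.

Lemma hvalD (u v : pt d) : hval h (u + v) = hval h u + hval h v.
Proof. by rewrite /hval mulmxDl mxE. Qed.

Lemma hvalZ (s : CC) (u : pt d) : hval h (s *: u) = s * hval h u.
Proof. by rewrite /hval -scalemxAl mxE. Qed.

Lemma hval0 : hval h 0 = 0.
Proof. by rewrite /hval mul0mx mxE. Qed.

Lemma hval_aff {p : pt d} : in_chart h p -> hval h (aff h p) = 1.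
Proof. by move=> hp; rewrite /aff hvalZ mulVf. Qed.

Lemma lift_in_chart {v p : pt d} :
  proj_eq v p -> in_chart h p -> hval h v != 0 /\ v = hval h v *: aff h p.
Proof.
move=> [c [c_neq0 ->]] hp; rewrite hvalZ /aff scalerA mulfK //.
by split; first exact: mulf_neq0.
Qed.

Lemma aff_sub_neq0 {p q : pt d} :
  in_chart h p -> in_chart h q -> ~ proj_eq p q -> aff h p - aff h q != 0.
Proof.
move=> hp hq not_pq; rewrite subr_eq0; apply/negP => /eqP E; apply: not_pq.
exists (hval h p / hval h q); split; first by rewrite mulf_neq0 ?invr_eq0.
by rewrite -scalerA -[_ *: q]/(aff h q) -E /aff scalerA mulfV ?scale1r.
Qed.

(* The coefficients of a linear relation among points of the hyperplane
   {h = 1} sum to zero, so it is a relation among difference vectors. *)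
Lemma affine_relation {x y z : pt d} {a b c : CC} :
  hval h x = 1 -> hval h y = 1 -> hval h z = 1 ->
  a *: x + b *: y + c *: z = 0 -> a *: (x - z) + b *: (y - z) = 0.
Proof.
move=> hx hy hz E.
have /eqP : hval h (a *: x + b *: y + c *: z) = 0 by rewrite E hval0.
rewrite !hvalD !hvalZ hx hy hz !mulr1 addr_eq0 => /eqP c_eq.
by rewrite !scalerBr addrACA -opprD -scalerDl c_eq scaleNr opprK.
Qed.

End AffineChart.

Lemma vratioZ {d} (u v : pt d) (s : CC) : v != 0 -> u = s *: v -> vratio u v = s.
Proof.
move=> v_neq0 ->; rewrite /vratio; case: pickP => [j vj_neq0 | v_eq0].
  by rewrite mxE mulfK.
by case/eqP: v_neq0; apply/rowP => j; rewrite mxE; apply/eqP/negbFE/v_eq0.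
Qed.

Lemma vratioNr {d} (u v : pt d) : vratio u (- v) = - vratio u v.
Proof.
rewrite /vratio (@eq_pick _ _ (fun j => v 0 j != 0)); last first.
  by move=> j /=; rewrite mxE oppr_eq0.
by case: pickP => [j _ | _]; rewrite ?mxE ?invrN ?mulrN ?oppr0.
Qed.

Lemma multiratioE {d n} (h : 'cV[CC]_(d.+1)) (P Q : 'I_n.+1 -> pt d) :
  multiratio h P Q
    = (-1) ^+ n.+1 * \prod_(i < n.+1) lambda h (P i) (P (inext i)) (Q i).
Proof.
rewrite /multiratio -[X in (-1) ^+ X](card_ord n.+1) -prodrN.
by apply: eq_bigr => i _; rewrite /lambda -vratioNr opprB.
Qed.

Lemma lambda_of_relation {d} {h : 'cV[CC]_(d.+1)} {x y z Vx Vy Vz : pt d}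
    {a b c : CC} :
  proj_eq Vx x -> proj_eq Vy y -> proj_eq Vz z ->
  in_chart h x -> in_chart h y -> in_chart h z -> ~ proj_eq y z ->
  a != 0 -> a *: Vx + b *: Vy + c *: Vz = 0 ->
  lambda h x y z = - (b / a) * (hval h Vy / hval h Vx).
Proof.
move=> Vx_x Vy_y Vz_z hx hy hz not_yz a_neq0 E.
have [kx_neq0 Vx_eq] := lift_in_chart Vx_x hx.
have [_ Vy_eq] := lift_in_chart Vy_y hy.
have [_ Vz_eq] := lift_in_chart Vz_z hz.
have E' : (a * hval h Vx) *: aff h x + (b * hval h Vy) *: aff h y
          + (c * hval h Vz) *: aff h z = 0.
  by rewrite -!scalerA -Vx_eq -Vy_eq -Vz_eq.
have /eqP := affine_relation (hval_aff hx) (hval_aff hy) (hval_aff hz) E'.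
rewrite addr_eq0 => /eqP rel.
apply: vratioZ; first exact: aff_sub_neq0.
rewrite -[LHS]scale1r -(mulVf (mulf_neq0 a_neq0 kx_neq0)) -scalerA rel.
rewrite scalerN -scaleNr scalerA; congr (_ *: _).
by rewrite invfM !mulNr mulrACA [b * _]mulrC [hval h Vy * _]mulrC.
Qed.

Lemma sum_set3 (M : nmodType) (T : finType) (A : {set T}) (x y z : T)
    (F : T -> M) :
  #|A| = 3%N -> x \in A -> y \in A -> z \in A ->
  x != y -> x != z -> y != z -> \sum_(w in A) F w = F x + F y + F z.
Proof.
move=> A3 xA yA zA xy xz yz.
have xyz : x \notin [set y; z] by rewrite !inE negb_or xy xz.
have -> : A = x |: [set y; z].
  apply/eqP; rewrite eq_sym eqEcard cardsU1 cards2 xyz yz A3 andbT.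
  by apply/subsetP => w; rewrite !inE => /or3P [] /eqP ->.
by rewrite big_setU1 //= big_setU1 ?inE //= big_set1 addrA.
Qed.

Lemma prod_cyclic_ratio (F : fieldType) n (k : 'I_n.+1 -> F) :
  (forall i, k i != 0) -> \prod_(i < n.+1) (k i / k (ord_pred i)) = 1.
Proof.
move=> k_neq0; rewrite prodf_div [X in X / _](reindex_inj (@ord_pred_inj n.+1)).
by rewrite divff //; apply/prodf_neq0 => i _.
Qed.

Section Face.

Context {d : nat} {B W : finType} {adj : B -> W -> bool}.
Context {T V : W -> pt d} {mu : B -> W -> CC}.
Context {n : nat} {bs : 'I_n.+1 -> B} {ws vs : 'I_n.+1 -> W}.
Context {h : 'cV[CC]_(d.+1)}.

Hypothesis deg3 : black_deg3 adj.
Hypothesis tcdT : tcd_map adj T.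
Hypothesis vrcV : vrc adj T V mu.
Hypothesis face : face_labelling adj bs ws vs.
Hypothesis chart : forall i, in_chart h (T (ws i)) && in_chart h (T (vs i)).

Lemma hval_lift_neq0 i : hval h (V (ws i)) != 0.
Proof.
have [_ Vw] := vrcV.1 (ws i).
by have /andP [hw _] := chart i; case: (lift_in_chart Vw hw).
Qed.

Lemma lambda_face i :
  lambda h (T (ws (iprev i))) (T (ws i)) (T (vs i))
    = - (mu (bs i) (ws i) / mu (bs i) (ws (iprev i))
         * (hval h (V (ws i)) / hval h (V (ws (iprev i))))).
Proof.
have [_ [T_dist _]] := tcdT; have [V_lift [mu_neq0 V_rel]] := vrcV.
have [[adj_prev adj_w adj_v] [prev_w v_prev v_w]] := face i.
have /andP [hw hv] := chart i; have /andP [hprev _] := chart (iprev i).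
have rel : mu (bs i) (ws (iprev i)) *: V (ws (iprev i))
            + mu (bs i) (ws i) *: V (ws i) + mu (bs i) (vs i) *: V (vs i) = 0.
  rewrite -(V_rel (bs i)) (eq_bigl (fun w => w \in [set w | adj (bs i) w]));
    last by move=> w; rewrite inE.
  by rewrite (@sum_set3 _ _ _ (ws (iprev i)) (ws i) (vs i) _ (deg3 (bs i)))
             ?inE //; rewrite eq_sym.
rewrite -mulNr; apply: (lambda_of_relation (V_lift _).2 (V_lift _).2 (V_lift _).2
                          hprev hw hv _ (mu_neq0 _ _ adj_prev) rel).
by apply: T_dist adj_w adj_v _; rewrite eq_sym.
Qed.

Lemma prod_lambda_face :
  \prod_(i < n.+1) lambda h (T (ws (iprev i))) (T (ws i)) (T (vs i))
    = (-1) ^+ n.+1 * \prod_(i < n.+1) (mu (bs i) (ws i) / mu (bs i) (ws (iprev i))).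
Proof.
rewrite (eq_bigr _ (fun i _ => lambda_face i)) prodrN card_ord big_split /=.
rewrite (@prod_cyclic_ratio _ _ (fun i => hval h (V (ws i)))) ?mulr1 //.
exact: hval_lift_neq0.
Qed.

End Face.

Theorem proposition7p10 (d : nat) (B W : finType) (adj : B -> W -> bool)
  (T : W -> pt d) (V : W -> pt d) (mu : B -> W -> CC)
  (n : nat) (bs : 'I_n.+1 -> B) (ws vs : 'I_n.+1 -> W)
  (h : 'cV[CC]_(d.+1)) :
  black_deg3 adj ->
  tcd_map adj T ->
  vrc adj T V mu ->
  face_labelling adj bs ws vs ->
  (forall i, in_chart h (T (ws i)) && in_chart h (T (vs i))) ->
  cluster_var mu bs ws
    = (-1) ^+ (n.+1).+1 * multiratio h (fun i => T (ws i)) (fun i => T (vs (inext i)))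
  /\ cluster_var mu bs ws
    = - \prod_(i < n.+1) lambda h (T (ws (iprev i))) (T (ws i)) (T (vs i)).
Proof.
move=> deg3 tcdT vrcV face chart.
have neg_prod : cluster_var mu bs ws = - \prod_(i < n.+1)
    lambda h (T (ws (iprev i))) (T (ws i)) (T (vs i)).
  rewrite (prod_lambda_face deg3 tcdT vrcV face chart).
  by rewrite /cluster_var exprS mulN1r mulNr.
have shift : \prod_(i < n.+1) lambda h (T (ws i)) (T (ws (inext i))) (T (vs (inext i)))
    = \prod_(i < n.+1) lambda h (T (ws (iprev i))) (T (ws i)) (T (vs i)).
  rewrite [RHS](reindex_inj (@ordS_inj n.+1)).
  by apply: eq_bigr => i _; rewrite /iprev ordSK.
split=> //; rewrite multiratioE shift neg_prod exprS mulN1r mulNr mulrA -expr2.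
by rewrite sqrr_sign mul1r.
Qed.
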